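(* Let $V$, $f$, $\mathcal{A}$, $k,\tau,\eta$ be as described in the context (in particular $f$ normalized monotone submodular, $\mathcal{A}$ satisfying the $\beta$-iterative property, $\eta\ge4(\log k+1)$, $2\le\tau\le\frac{k}{3\eta(\log k+2)}$). Let $Y$ and $Z$ be buckets constructed by PRo such that $Z$ is constructed at a later time than $Y$, and let $E_Y\subseteq Y$ and $E_Z\subseteq Z$ be arbitrary. Let $X\subseteq V$ be any set and $\alpha\ge0$ a constant such that $$f((Y\setminus E_Y)\cup X)\ge\frac{1}{1+\alpha}f(Y)\quad\text{and}\quad f(E_Y\mid X)\le\alpha f(X).$$ Then, with $\alpha_{\mathrm{next}}=\beta\frac{|E_Z|}{|Y|}(1+\alpha)+\alpha$, $$f(E_Z\mid(Y\setminus E_Y)\cup X)\le\alpha_{\mathrm{next}}\,f((Y\setminus E_Y)\cup X)$$ and $$f((Z\setminus E_Z)\cup(Y\setminus E_Y)\cup X)\ge\frac{1}{1+\alpha_{\mathrm{next}}}f(Z).$$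
   Context: Notation: $f(Y\mid X):=f(X\cup Y)-f(X)$; logarithms are to base 2. $V$ is a finite ground set, $f:2^V\to\mathbb{R}_{\ge0}$ is normalized ($f(\emptyset)=0$), monotone and submodular. A subroutine $\mathcal{A}(k',T)$ outputs an ordered set $(v_1,\dots,v_{k'})$ of elements of $T\subseteq V$; $\mathcal{A}_i(T)=\{v_1,\dots,v_i\}$; it satisfies the $\beta$-iterative property ($\beta\ge1$) if $f(\mathcal{A}_{i+1}(T))-f(\mathcal{A}_i(T))\ge\frac1\beta\max_{v\in T}f(v\mid\mathcal{A}_i(T))$ for all $T,i$. Algorithm PRo (inputs $V,k,\tau,\eta\in\mathbb{N}_+,\mathcal{A}$): $S_0\leftarrow\emptyset$; for $i=0,\dots,\lceil\log\tau\rceil$ and for $j=1,\dots,\lceil\tau/2^i\rceil$: $B_j\leftarrow\mathcal{A}(2^i\eta,V\setminus S_0)$, $S_0\leftarrow S_0\cup B_j$ (each such $B_j$ is a bucket of partition $i$); then $S_1\leftarrow\mathcal{A}(k-|S_0|,V\setminus S_0)$; output $S=S_0\cup S_1$. *)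

From HB Require Import structures.
From mathcomp Require Import all_boot all_order all_algebra.
From mathcomp Require Import reals exp.
Set Implicit Arguments. Unset Strict Implicit. Unset Printing Implicit Defensive.
Import Order.TTheory GRing.Theory Num.Theory.
Local Open Scope ring_scope.

Section Defs.
Variables (R : realType) (V : finType).

Definition marg (f : {set V} -> R) (Y X : {set V}) : R := f (X :|: Y) - f X.

Definition normalized (f : {set V} -> R) := f set0 = 0.
Definition nonneg_fun (f : {set V} -> R) := forall S, 0 <= f S.
Definition monotone (f : {set V} -> R) := forall A B : {set V}, A \subset B -> f A <= f B.
Definition submodular (f : {set V} -> R) :=
  forall A B : {set V}, f (A :|: B) + f (A :&: B) <= f A + f B.

(* A subroutine: A k' T is the ordered output (v_1,...,v_k'') *)
Definition subroutine := nat -> {set V} -> seq V.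

Definition prefix_set (s : seq V) (i : nat) : {set V} := [set x in take i s].

Definition valid_subroutine (A : subroutine) :=
  forall k' (T : {set V}), [/\ uniq (A k' T), {subset A k' T <= T} &
                   size (A k' T) = minn k' #|T| ].

Definition beta_iterative (f : {set V} -> R) (A : subroutine) (beta : R) :=
  forall k' (T : {set V}) i, (i < size (A k' T))%N ->
    forall v, v \in T ->
      beta^-1 * marg f [set v] (prefix_set (A k' T) i)
        <= f (prefix_set (A k' T) i.+1) - f (prefix_set (A k' T) i).

Definition ceil_div (a b : nat) : nat := ((a + b.-1) %/ b)%N.

(* sizes of the buckets built by PRo, in order of construction:
   for i = 0..ceil(log tau), ceil(tau/2^i) buckets of size 2^i eta *)
Definition pro_sizes (tau eta : nat) : seq nat :=
  flatten [seq nseq (ceil_div tau (2 ^ i)) (2 ^ i * eta)%N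
          | i <- iota 0 (up_log 2 tau).+1].

Fixpoint pro_buckets_from (A : subroutine) (S0 : {set V}) (sz : seq nat)
    : seq {set V} :=
  match sz with
  | [::] => [::]
  | s :: sz' => let B := [set x in A s (~: S0)] in
                B :: pro_buckets_from A (S0 :|: B) sz'
  end.

Definition pro_buckets (A : subroutine) (tau eta : nat) : seq {set V} :=
  pro_buckets_from A set0 (pro_sizes tau eta).

End Defs.

Definition log2 {R : realType} (x : R) : R := ln x / ln 2.

(* Let W = (Y \ E_Y) ∪ X. Since Z is built after Y, Z lies in the ground set T from
   which the subroutine greedily picked Y. By the beta-iterative property each of the
   |Y| greedy steps gains at least f(e | Y) / beta for every e in T, and the gains
   telescope to f(Y); with subadditivity of marginals this gives
   f(E_Z | Y) <= beta |E_Z| / |Y| f(Y).  Diminishing returns then bounds f(E_Z | W) by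
   f(E_Z | Y) + f(E_Y | X) <= (beta |E_Z| / |Y| (1 + alpha) + alpha) f(W), and the second
   claim follows from f(Z) <= f((Z \ E_Z) ∪ W) + f(E_Z | W). *)

From HB Require Import structures.
From mathcomp Require Import all_boot all_order all_algebra.
From mathcomp Require Import reals exp.
From mathcomp Require Import ring lra.
Set Implicit Arguments. Unset Strict Implicit. Unset Printing Implicit Defensive.
Import Order.TTheory GRing.Theory Num.Theory.
Local Open Scope ring_scope.

Lemma set_nil (T : finType) : [set x in [::]] = set0 :> {set T}.
Proof. by apply/setP => x; rewrite !inE. Qed.

Section SubmodularMarginals.
Variables (R : realType) (V : finType) (f : {set V} -> R).
Hypothesis f_mono : monotone f.
Hypothesis f_sub : submodular f.

Lemma marg_setU (S T Y : {set V}) :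
  marg f (S :|: T) Y = marg f S (Y :|: T) + marg f T Y.
Proof. by rewrite /marg setUA setUAC addrA subrK. Qed.

Lemma marg_antimonotone (S A B : {set V}) :
  A \subset B -> marg f S B <= marg f S A.
Proof.
move=> sAB; rewrite /marg.
have := f_sub (A :|: S) B.
have -> : A :|: S :|: B = B :|: S by rewrite setUAC (setUidPr sAB).
have : f A <= f ((A :|: S) :&: B) by apply: f_mono; rewrite subsetI subsetUl.
lra.
Qed.

Lemma marg_le_sum1 (S Y : {set V}) :
  marg f S Y <= \sum_(e in S) marg f [set e] Y.
Proof.
rewrite -big_enum -[in X in marg f X](set_enum S).
elim: (enum S) => [|x s IHs].
  by rewrite set_nil big_nil /marg setU0 subrr.
have -> : [set y in x :: s] = [set x] :|: [set y in s].
  by apply/setP => y; rewrite !inE.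
by rewrite big_cons marg_setU lerD // marg_antimonotone // subsetUl.
Qed.

Lemma marg_setDU_le (Y EY X EZ : {set V}) (alpha gamma : R) :
  0 <= alpha -> 0 <= gamma -> EY \subset Y ->
  (1 + alpha)^-1 * f Y <= f ((Y :\: EY) :|: X) ->
  marg f EY X <= alpha * f X -> marg f EZ Y <= gamma * f Y ->
  marg f EZ ((Y :\: EY) :|: X) <= (gamma * (1 + alpha) + alpha) * f ((Y :\: EY) :|: X).
Proof.
set W := (Y :\: EY) :|: X => alpha_ge0 gamma_ge0 sEY_Y fY_le fEY_le fEZ_le.
have WEY : W :|: EY = Y :|: X.
  apply/setP => x; rewrite !inE; have := subsetP sEY_Y x.
  by case: (x \in EY) (x \in Y) (x \in X) => [] [] [] // /(_ isT).
have fX_W : alpha * f X <= alpha * f W by rewrite ler_wpM2l // f_mono // subsetUr.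
have fY_W : gamma * f Y <= gamma * ((1 + alpha) * f W).
  by rewrite ler_wpM2l // -ler_pdivrMl // ltr_pwDl.
have fEZ_W : f (W :|: EZ) <= f (Y :|: X :|: EZ) by rewrite f_mono // -WEY setSU // subsetUl.
have fEY_W : marg f EY W <= marg f EY X by rewrite marg_antimonotone // subsetUr.
have fEZ_YX : marg f EZ (Y :|: X) <= marg f EZ Y by rewrite marg_antimonotone // subsetUl.
move: fEY_le fEZ_le fEY_W fEZ_YX; rewrite /marg WEY mulrDl.
lra.
Qed.

Lemma f_setDU_ge (Z EZ W : {set V}) (a : R) : 0 <= a ->
  marg f EZ W <= a * f W -> (1 + a)^-1 * f Z <= f ((Z :\: EZ) :|: W).
Proof.
set U := (Z :\: EZ) :|: W => a_ge0 fEZ_le.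
have fZ_U : f Z <= f (U :|: EZ).
  apply/f_mono/subsetP => x xZ; rewrite !inE xZ.
  by case: (x \in EZ); rewrite ?orbT.
have fEZ_U : marg f EZ U <= marg f EZ W by rewrite marg_antimonotone // subsetUr.
have fW_U : a * f W <= a * f U by rewrite ler_wpM2l // f_mono // subsetUr.
rewrite ler_pdivrMl ?ltr_pwDl // mulrDl mul1r.
move: fEZ_le fEZ_U; rewrite /marg; lra.
Qed.

End SubmodularMarginals.

Section GreedyBucket.
Variables (R : realType) (V : finType) (f : {set V} -> R).
Variables (A : subroutine V) (beta : R).
Hypothesis f_norm : normalized f.
Hypothesis f_mono : monotone f.
Hypothesis f_sub : submodular f.
Hypothesis A_valid : valid_subroutine A.
Hypothesis beta_ge1 : 1 <= beta.
Hypothesis A_iter : beta_iterative f A beta.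

Let beta_gt0 : 0 < beta. Proof. exact: lt_le_trans ltr01 beta_ge1. Qed.

Lemma marg1_greedy_le s (T : {set V}) (e : V) : (0 < s)%N -> e \in T ->
  marg f [set e] [set x in A s T]
    <= beta * f [set x in A s T] / #|[set x in A s T]|%:R.
Proof.
move=> s_gt0 eT; set lst := A s T; set B := [set x in lst].
have [lst_uniq _ size_lst] := A_valid s T.
have cardB : #|B| = size lst by rewrite cardsE; apply/card_uniqP.
have lst_gt0 : (0 < size lst)%N.
  by rewrite size_lst leq_min s_gt0; apply/card_gt0P; exists e.
have gain i : (0 <= i < size lst)%N ->
    beta^-1 * marg f [set e] B <= f (prefix_set lst i.+1) - f (prefix_set lst i).
  move=> /andP[_ ilt]; apply: le_trans (A_iter ilt eT).
  rewrite ler_pM2l ?invr_gt0 // marg_antimonotone //.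
  by apply/subsetP => x; rewrite !inE => /mem_take.
have := ler_sum_nat gain; rewrite sumr_const_nat subn0.
rewrite (telescope_sumr (fun i => f (prefix_set lst i))) // /prefix_set take_size.
rewrite take0 set_nil f_norm subr0 -/B -cardB => total.
by rewrite ler_pdivlMr ?ltr0n ?cardB // -ler_pdivrMl // mulrA mulr_natr -cardB.
Qed.

Lemma marg_greedy_le s (T S : {set V}) : (0 < s)%N -> S \subset T ->
  marg f S [set x in A s T]
    <= beta * (#|S|%:R / #|[set x in A s T]|%:R) * f [set x in A s T].
Proof.
move=> s_gt0 sST; set B := [set x in A s T].
apply: le_trans (marg_le_sum1 f_mono f_sub S B) _.
have -> : beta * (#|S|%:R / #|B|%:R) * f B = \sum_(e in S) (beta * f B / #|B|%:R).
  by rewrite sumr_const -mulr_natr; ring.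
by apply: ler_sum => e eS; apply: marg1_greedy_le => //; apply: (subsetP sST).
Qed.

End GreedyBucket.

Section ProBuckets.
Variables (V : finType) (A : subroutine V).
Hypothesis A_valid : valid_subroutine A.

Lemma size_pro_buckets_from (S : {set V}) sz :
  size (pro_buckets_from A S sz) = size sz.
Proof. by elim: sz S => //= s sz IHsz S; rewrite IHsz. Qed.

Lemma pro_buckets_from_subsetC (S : {set V}) sz j :
  nth set0 (pro_buckets_from A S sz) j \subset ~: S.
Proof.
elim: sz S j => [|s sz IHsz] S [|j] /=; rewrite ?nth_nil ?sub0set //.
  by have [_ sAT _] := A_valid s (~: S); apply/subsetP => x; rewrite inE => /sAT.
by apply: subset_trans (IHsz _ j) _; rewrite setCU subsetIl.
Qed.

Lemma pro_buckets_from_later (S : {set V}) sz p q :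
  (p <= q)%N -> (p < size sz)%N ->
  exists T : {set V},
    nth set0 (pro_buckets_from A S sz) p = [set x in A (nth 0%N sz p) (~: T)] /\
    nth set0 (pro_buckets_from A S sz) q \subset ~: T.
Proof.
elim: sz S p q => [|s sz IHsz] S [|p] q //= le_pq lt_p_sz.
  by exists S; split => //; apply: (pro_buckets_from_subsetC S (s :: sz)).
by case: q le_pq => // q le_pq; apply: IHsz.
Qed.

End ProBuckets.

Lemma pro_sizes_gt0 (tau eta s : nat) :
  (0 < eta)%N -> s \in pro_sizes tau eta -> (0 < s)%N.
Proof.
move=> eta_gt0 /flatten_mapP[i _]; rewrite mem_nseq => /andP[_ /eqP ->].
by rewrite muln_gt0 expn_gt0.
Qed.

Theorem lemma5 (R : realType) (V : finType) (f : {set V} -> R)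
  (A : subroutine V) (beta : R) (k tau eta : nat)
  (f_norm : normalized f) (f_nonneg : nonneg_fun f)
  (f_mono : monotone f) (f_sub : submodular f)
  (A_valid : valid_subroutine A)
  (beta_ge1 : 1 <= beta) (A_iter : beta_iterative f A beta)
  (heta : 4 * (log2 (k%:R : R) + 1) <= eta%:R)
  (htau_lo : (2 <= tau)%N)
  (htau_hi : tau%:R <= k%:R / (3 * eta%:R * (log2 (k%:R : R) + 2)))
  (p q : nat) (hpq : (p < q)%N) (hq : (q < size (pro_buckets A tau eta))%N)
  (EY EZ X : {set V}) (alpha : R) (halpha : 0 <= alpha) :
  let Y := nth set0 (pro_buckets A tau eta) p in
  let Z := nth set0 (pro_buckets A tau eta) q in
  EY \subset Y -> EZ \subset Z ->
  f ((Y :\: EY) :|: X) >= (1 + alpha)^-1 * f Y ->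
  marg f EY X <= alpha * f X ->
  let alpha_next := beta * (#|EZ|%:R / #|Y|%:R) * (1 + alpha) + alpha in
  marg f EZ ((Y :\: EY) :|: X) <= alpha_next * f ((Y :\: EY) :|: X) /\
  f ((Z :\: EZ) :|: (Y :\: EY) :|: X) >= (1 + alpha_next)^-1 * f Z.
Proof.
move=> Y Z sEY sEZ fY_le fEY_le alpha_next.
have eta_gt0 : (0 < eta)%N.
  move: htau_hi; rewrite lt0n; apply: contraTN => /eqP eta0.
  by rewrite eta0 mulr0 mul0r invr0 mulr0 -ltNge ltr0n (leq_trans _ htau_lo).
have lt_p_sz : (p < size (pro_sizes tau eta))%N.
  by rewrite -(size_pro_buckets_from A set0) (ltn_trans hpq).
have [T [YE ZT]] := pro_buckets_from_later A_valid set0 (ltnW hpq) lt_p_sz.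
have fEZ_Y : marg f EZ Y <= beta * (#|EZ|%:R / #|Y|%:R) * f Y.
  rewrite /Y /pro_buckets YE; apply: marg_greedy_le => //.
    exact: pro_sizes_gt0 eta_gt0 (mem_nth 0%N lt_p_sz).
  exact: subset_trans sEZ ZT.
have gamma_ge0 : 0 <= beta * (#|EZ|%:R / #|Y|%:R).
  by rewrite mulr_ge0 ?divr_ge0 // (le_trans ler01 beta_ge1).
have fEZ_W := marg_setDU_le f_mono f_sub halpha gamma_ge0 sEY fY_le fEY_le fEZ_Y.
split=> //; rewrite -setUA; apply: (f_setDU_ge f_mono f_sub Z _ fEZ_W).
by rewrite /alpha_next addr_ge0 // mulr_ge0 // addr_ge0.
Qed.
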